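(* Let $f,g,h$ be smooth real functions of one variable satisfying $f\neq 0$, $g\neq 0$, $g'\neq 0$ (where $'$ denotes $d/du$), and consider the generalized Kudryashov–Sinelshchikov equation $$\mathfrak{F}:=u_t-f(u)u_x-g(u)u_{xx}+h(u)u_x^2=0$$ for $u=u(t,x)$. Then this equation is nonlinearly self-adjoint. Moreover, writing $E(u):=\exp\left(-\int \frac{g'(u)+h(u)}{g(u)}\,du\right)$: (i) If $f(u)=a\,g(u)+b$ with constants $a,b$, and $f$ itself is not a constant, then the substitution is given by $$\phi(t,x,u)=\big(c_1\exp(ax+abt)+c_2\big)E(u).$$ (ii) If $f(u)=b$ is a constant, then the substitution is given by $$\phi(t,x,u)=\big(c_3(x+bt)+c_4\big)E(u).$$ (iii) In all remaining cases, the substitution is $\phi(u)=c_5\,E(u)$. Here $c_1,\dots,c_5$ are constants with $(c_1,c_2)\neq(0,0)$, $(c_3,c_4)\neq(0,0)$, $c_5\neq 0$.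
   Context: For a differential equation $\mathfrak{F}[u]=0$ in independent variables $t,x$ and dependent variable $u$, introduce a new dependent variable $\nu=\nu(t,x)$ (the adjoint variable). The formal Lagrangian is $\mathfrak{L}=\nu\mathfrak{F}$, and the adjoint differential function is $\mathfrak{F}^*=\frac{\delta\mathfrak{L}}{\delta u}$, where for a second-order $\mathfrak{F}$ the Euler operator is $\frac{\delta}{\delta u}=\frac{\partial}{\partial u}-D_t\frac{\partial}{\partial u_t}-D_x\frac{\partial}{\partial u_x}+D_x^2\frac{\partial}{\partial u_{xx}}$ (plus the corresponding mixed/other second-derivative terms if present), with $D_t,D_x$ the total derivative operators. The equation $\mathfrak{F}=0$ is called nonlinearly self-adjoint if there is a substitution $\nu=\phi(t,x,u)\neq 0$ (with derivatives of $\nu$ replaced by the corresponding total derivatives of $\phi$) such that $\mathfrak{F}^*|_{\nu=\phi(t,x,u)}=\lambda\mathfrak{F}$ for some coefficient $\lambda=\lambda(t,x,u,\dots)$. If $\phi$ depends only on $u$, the equation is called quasi self-adjoint; if $\phi=u$ works, it is called strictly self-adjoint. The antiderivative in $E(u)$ is any fixed antiderivative. *)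

From Stdlib Require Import Reals List.
From Coquelicot Require Import Coquelicot.
Open Scope R_scope.

Definition smooth1 (f : R -> R) : Prop :=
  forall (n : nat) (x : R), ex_derive (Derive_n f n) x.

Definition pd2 (i : nat) (u : R -> R -> R) : R -> R -> R :=
  match i with
  | O => fun t x => Derive (fun s => u s x) t
  | _ => fun t x => Derive (fun y => u t y) x
  end.

Fixpoint iterD2 (l : list nat) (u : R -> R -> R) : R -> R -> R :=
  match l with
  | nil => u
  | i :: l' => pd2 i (iterD2 l' u)
  end.

Definition smooth2 (u : R -> R -> R) : Prop :=
  forall l : list nat,
    (forall t x, ex_derive (fun s => iterD2 l u s x) t
                 /\ ex_derive (fun y => iterD2 l u t y) x)
    /\ (forall t x, continuous (fun p : R * R => iterD2 l u (fst p) (snd p)) (t, x)).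

Definition pd3 (i : nat) (φ : R -> R -> R -> R) : R -> R -> R -> R :=
  match i with
  | O => fun t x w => Derive (fun s => φ s x w) t
  | 1%nat => fun t x w => Derive (fun y => φ t y w) x
  | _ => fun t x w => Derive (fun z => φ t x z) w
  end.

Fixpoint iterD3 (l : list nat) (φ : R -> R -> R -> R) : R -> R -> R -> R :=
  match l with
  | nil => φ
  | i :: l' => pd3 i (iterD3 l' φ)
  end.

Definition smooth3 (φ : R -> R -> R -> R) : Prop :=
  forall l : list nat,
    (forall t x w, ex_derive (fun s => iterD3 l φ s x w) t
                   /\ ex_derive (fun y => iterD3 l φ t y w) x
                   /\ ex_derive (fun z => iterD3 l φ t x z) w)
    /\ (forall t x w,
          continuous (fun p : R * R * R => iterD3 l φ (fst (fst p)) (snd (fst p)) (snd p))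
                     (t, x, w)).

Definition KS (f g h : R -> R) (t x u ut ux uxx : R) : R :=
  ut - f u * ux - g u * uxx + h u * ux ^ 2.

Definition formal_lagrangian (f g h : R -> R) (t x u ut ux uxx nu : R) : R :=
  nu * KS f g h t x u ut ux uxx.

Definition jet_ut (u : R -> R -> R) (t x : R) : R := Derive (fun s => u s x) t.
Definition jet_ux (u : R -> R -> R) (t x : R) : R := Derive (fun y => u t y) x.
Definition jet_uxx (u : R -> R -> R) (t x : R) : R := Derive (fun y => jet_ux u t y) x.

(* Euler operator  d/du = ∂/∂u - D_t ∂/∂u_t - D_x ∂/∂u_x + D_x^2 ∂/∂u_xx
   applied to a Lagrangian L(t,x,u,u_t,u_x,u_xx,nu), evaluated along actual
   functions u(t,x), nu(t,x); total derivatives D_t, D_x become partial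
   derivatives of the composed functions of (t,x). *)
Definition euler_op (L : R -> R -> R -> R -> R -> R -> R -> R)
    (u nu : R -> R -> R) (t x : R) : R :=
  let J := fun (k : R -> R -> R -> R -> R -> R -> R -> R) (t x : R) =>
             k t x (u t x) (jet_ut u t x) (jet_ux u t x) (jet_uxx u t x) (nu t x) in
  let dLu   := J (fun t x w a b c n => Derive (fun z => L t x z a b c n) w) in
  let dLut  := J (fun t x w a b c n => Derive (fun z => L t x w z b c n) a) in
  let dLux  := J (fun t x w a b c n => Derive (fun z => L t x w a z c n) b) in
  let dLuxx := J (fun t x w a b c n => Derive (fun z => L t x w a b z n) c) in
  dLu t x
  - Derive (fun s => dLut s x) t
  - Derive (fun y => dLux t y) x
  + Derive (fun y => Derive (fun z => dLuxx t z) y) x.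

Definition adjoint_KS (f g h : R -> R) (u nu : R -> R -> R) (t x : R) : R :=
  euler_op (formal_lagrangian f g h) u nu t x.

(* phi is an admissible substitution nu = phi(t,x,u) making the equation
   nonlinearly self-adjoint: phi is smooth, not identically zero, and
   F^*|_{nu = phi(t,x,u)} = lambda F for some coefficient lambda depending on
   the jet (t,x,u,u_t,u_x,u_xx); the identity is required along every smooth u. *)
Definition nsa_substitution (f g h : R -> R) (φ : R -> R -> R -> R) : Prop :=
  smooth3 φ /\
  (exists t x w, φ t x w <> 0) /\
  exists λ : R -> R -> R -> R -> R -> R -> R,
    forall u : R -> R -> R, smooth2 u ->
    forall t x : R,
      adjoint_KS f g h u (fun t x => φ t x (u t x)) t x
      = λ t x (u t x) (jet_ut u t x) (jet_ux u t x) (jet_uxx u t x)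
        * KS f g h t x (u t x) (jet_ut u t x) (jet_ux u t x) (jet_uxx u t x).

Definition nonlinearly_self_adjoint (f g h : R -> R) : Prop :=
  exists φ, nsa_substitution f g h φ.

(** Substitutions of the form ν = C(t,x) E(u), where C solves
    C_t = f(w) C_x - g(w) C_xx for every value w, work: since E' = -E (g' + h)/g, the
    adjoint along them equals C E (g' + h)/g times F.  Conversely, test a substitution
    φ against quadratic polynomials u for which F vanishes at a point while u_xx = r
    there is arbitrary.  The part of F^* = λ F proportional to r forces
    g φ_u + (g' + h) φ = 0, i.e. φ = C(t,x) E(u), and the rest is the equation for C.
    Comparing that equation at two values of w gives C_xx = a C_x and C_t = b C_x when
    f = a g + b with g not constant, whose solutions are the families (i) and (ii); when f
    is not affine in g, C_x = 0 and C is a constant. *)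

From Stdlib Require Import Reals Lra Lia List Classical FunctionalExtensionality Setoid Morphisms.
From Coquelicot Require Import Coquelicot.
Open Scope R_scope.

(** * Calculus in one variable *)

Lemma is_derive_extR (f g : R -> R) (x l : R) :
  (forall y, f y = g y) -> is_derive f x l -> is_derive g x l.
Proof. apply is_derive_ext. Qed.

(* [auto_derive] writes derivatives of unknown functions as [Derive (fun x => f x)], which
   this lemma rewrites; hypotheses fed to it annotate their binders with [R] (not the
   canonical structure [R_AbsRing]) so that the patterns match syntactically. *)
Lemma Derive_eta (f : R -> R) (x l : R) : is_derive f x l -> Derive (fun y => f y) x = l.
Proof. apply is_derive_unique. Qed.

#[local] Instance Derive_proper : Proper (pointwise_relation R eq ==> eq ==> eq) Derive.
Proof. intros f1 f2 H x1 x2 ->. apply Derive_ext. exact H. Qed.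

Ltac eta_reduce :=
  repeat match goal with |- context [fun x : R => ?F x] => change (fun x : R => F x) with F end.

Ltac ex_derive_side :=
  repeat match goal with |- _ /\ _ => split end; try exact I; auto; eexists; eauto.

Ltac compute_Derive F x :=
  let H := fresh in
  eassert (H : is_derive F x _) by (auto_derive; [ex_derive_side | reflexivity]);
  rewrite (is_derive_unique F x _ H); clear H.

Lemma Derive_correct_fun (f df : R -> R) :
  (forall x, is_derive f x (df x)) -> Derive f = df.
Proof. intros H; apply functional_extensionality; intro; apply is_derive_unique, H. Qed.

Lemma is_derive_0_const (F : R -> R) :
  (forall x, is_derive F x 0) -> forall x y, F x = F y.
Proof.
  intros H x y. destruct (Rtotal_order x y) as [Hxy|[<-|Hxy]]; auto.
  - apply eq_is_derive; auto.
  - symmetry; apply eq_is_derive; auto.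
Qed.

Lemma same_derivative_const_diff (F G dF : R -> R) :
  (forall x, is_derive F x (dF x)) -> (forall x, is_derive G x (dF x)) ->
  forall x, F x = G x + (F 0 - G 0).
Proof.
  intros HF HG x.
  assert (H0 : forall x, is_derive (fun y => F y - G y) x 0).
  { intros y. replace 0 with (dF y - dF y) by ring. apply (is_derive_minus F G); auto. }
  pose proof (is_derive_0_const _ H0 x 0). lra.
Qed.

Lemma linear_ode_exp (y P p : R -> R) :
  (forall x, is_derive P x (p x)) -> (forall x, is_derive y x (p x * y x)) ->
  forall x, y x = y 0 * exp (P x - P 0).
Proof.
  intros HP Hy x.
  assert (H0 : forall x, is_derive (fun z => y z * exp (- P z)) x 0).
  { intros z. auto_derive; [ex_derive_side|].
    rewrite (Derive_eta _ _ _ (Hy z)), (Derive_eta _ _ _ (HP z)). ring. }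
  pose proof (is_derive_0_const _ H0 x 0) as E.
  apply (Rmult_eq_reg_r (exp (- P x))); [|apply Rgt_not_eq, exp_pos].
  rewrite E, Rmult_assoc, <- exp_plus. do 2 f_equal. ring.
Qed.

Lemma linear_ode_exp_const (y : R -> R) (a : R) :
  (forall x, is_derive y x (a * y x)) -> forall x, y x = y 0 * exp (a * x).
Proof.
  intros Hy x. rewrite (linear_ode_exp y (fun x => a * x) (fun _ => a)); auto.
  - do 2 f_equal. ring.
  - intros z. auto_derive; auto; ring.
Qed.

Fixpoint derivable_upto (n : nat) (f : R -> R) : Prop :=
  (forall x, ex_derive f x) /\
  match n with O => True | S m => derivable_upto m (Derive f) end.

Lemma smooth1_derivable_upto (f : R -> R) :
  smooth1 f <-> forall n, derivable_upto n f.
Proof.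
  assert (DnS : forall f n, Derive_n f (S n) = Derive_n (Derive f) n).
  { intros g n. apply functional_extensionality; intro x.
    replace (S n) with (n + 1)%nat by lia. rewrite <- (Derive_n_comp g n 1). reflexivity. }
  split.
  - intros H n; revert f H; induction n; intros f H; split; try exact I; try apply (H 0%nat).
    apply IHn. intros k x. rewrite <- DnS. apply H.
  - intros H n; revert f H; induction n; intros f H x.
    + apply (H 0%nat).
    + rewrite DnS. apply IHn. intros k. apply (H (S k)).
Qed.

Lemma smooth1_ex_derive (f : R -> R) : smooth1 f -> forall x, ex_derive f x.
Proof. intros H; exact (H 0%nat). Qed.

Lemma derivable_upto_ex n f : derivable_upto n f -> forall x, ex_derive f x.
Proof. destruct n; simpl; tauto. Qed.

Lemma derivable_upto_S n f : derivable_upto (S n) f -> derivable_upto n f.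
Proof. revert f; induction n; intros f H; simpl in *; split; try tauto. apply IHn; tauto. Qed.

Lemma derivable_upto_Derive n f : derivable_upto (S n) f -> derivable_upto n (Derive f).
Proof. simpl; tauto. Qed.

Lemma derivable_upto_const n c : derivable_upto n (fun _ => c).
Proof.
  revert c; induction n; intros c; split; try exact I; try (intros; apply ex_derive_const).
  rewrite (Derive_correct_fun _ (fun _ => 0)); auto using is_derive_const.
Qed.

Lemma derivable_upto_plus n : forall f g,
  derivable_upto n f -> derivable_upto n g -> derivable_upto n (fun x => f x + g x).
Proof.
  induction n; intros f g Hf Hg;
    pose proof (derivable_upto_ex _ _ Hf); pose proof (derivable_upto_ex _ _ Hg);
    (split; [intros x; auto_derive; ex_derive_side|]); [exact I|].
  rewrite (Derive_correct_fun _ (fun x => Derive f x + Derive g x))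
    by (intros x; auto_derive; [ex_derive_side | eta_reduce; ring]).
  apply IHn; apply derivable_upto_Derive; auto.
Qed.

Lemma derivable_upto_mult n : forall f g,
  derivable_upto n f -> derivable_upto n g -> derivable_upto n (fun x => f x * g x).
Proof.
  induction n; intros f g Hf Hg;
    pose proof (derivable_upto_ex _ _ Hf); pose proof (derivable_upto_ex _ _ Hg);
    (split; [intros x; auto_derive; ex_derive_side|]); [exact I|].
  rewrite (Derive_correct_fun _ (fun x => Derive f x * g x + f x * Derive g x))
    by (intros x; auto_derive; [ex_derive_side | eta_reduce; ring]).
  apply derivable_upto_plus; apply IHn; auto using derivable_upto_Derive, derivable_upto_S.
Qed.

Lemma derivable_upto_exp n : forall f,
  derivable_upto n f -> derivable_upto n (fun x => exp (f x)).
Proof.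
  induction n; intros f Hf; pose proof (derivable_upto_ex _ _ Hf);
    (split; [intros x; auto_derive; ex_derive_side|]); [exact I|].
  rewrite (Derive_correct_fun _ (fun x => exp (f x) * Derive f x))
    by (intros x; auto_derive; [ex_derive_side | eta_reduce; ring]).
  apply derivable_upto_mult; auto using derivable_upto_Derive, derivable_upto_S.
Qed.

Lemma derivable_upto_inv n : forall f, (forall x, f x <> 0) ->
  derivable_upto n f -> derivable_upto n (fun x => / f x).
Proof.
  induction n; intros f Hn Hf; pose proof (derivable_upto_ex _ _ Hf);
    (split; [intros x; auto_derive; ex_derive_side|]); [exact I|].
  rewrite (Derive_correct_fun _ (fun x => (-1) * Derive f x * (/ f x * / f x)))
    by (intros x; auto_derive; [ex_derive_side | eta_reduce; field; auto]).
  repeat apply derivable_upto_mult;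
    auto using derivable_upto_Derive, derivable_upto_S, derivable_upto_const.
Qed.

Lemma derivable_upto_antiderivative n (P q : R -> R) :
  derivable_upto n q -> (forall w, is_derive P w (q w)) -> derivable_upto (S n) P.
Proof.
  intros Hq HP. split; [intros w; exists (q w); apply HP|].
  rewrite (Derive_correct_fun _ _ HP). exact Hq.
Qed.

Lemma smooth1_exp_opp_integral (g h P : R -> R) :
  smooth1 g -> smooth1 h -> (forall w, g w <> 0) ->
  (forall w, is_derive P w ((Derive g w + h w) / g w)) ->
  smooth1 (fun w => exp (- P w)).
Proof.
  rewrite !smooth1_derivable_upto. intros Hg Hh Hg0 HP n. apply derivable_upto_exp.
  replace (fun w => - P w) with (fun w => (-1) * P w)
    by (apply functional_extensionality; intros; ring).
  apply derivable_upto_mult; [apply derivable_upto_const|].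
  apply derivable_upto_S, (derivable_upto_antiderivative n P (fun w => (Derive g w + h w) / g w));
    [|exact HP].
  apply derivable_upto_mult; [apply derivable_upto_plus|apply derivable_upto_inv]; auto.
  apply derivable_upto_Derive, Hg.
Qed.

(** * The adjoint equation *)

Section FormalLagrangian.
Variables (f g h : R -> R) (t x w ut ux uxx nu : R).

Lemma formal_lagrangian_d_ut :
  Derive (fun z => formal_lagrangian f g h t x w z ux uxx nu) ut = nu.
Proof. apply is_derive_unique. unfold formal_lagrangian, KS. auto_derive; auto; ring. Qed.

Lemma formal_lagrangian_d_ux :
  Derive (fun z => formal_lagrangian f g h t x w ut z uxx nu) ux = nu * (- f w + 2 * h w * ux).
Proof. apply is_derive_unique. unfold formal_lagrangian, KS. auto_derive; auto; ring. Qed.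

Lemma formal_lagrangian_d_uxx :
  Derive (fun z => formal_lagrangian f g h t x w ut ux z nu) uxx = - (nu * g w).
Proof. apply is_derive_unique. unfold formal_lagrangian, KS. auto_derive; auto; ring. Qed.

Lemma formal_lagrangian_d_u :
  ex_derive f w -> ex_derive g w -> ex_derive h w ->
  Derive (fun z => formal_lagrangian f g h t x z ut ux uxx nu) w
  = nu * (- Derive f w * ux - Derive g w * uxx + Derive h w * ux ^ 2).
Proof.
  intros. apply is_derive_unique. unfold formal_lagrangian, KS.
  auto_derive; [tauto | eta_reduce; ring].
Qed.

End FormalLagrangian.

Lemma adjoint_KS_eq (f g h : R -> R) (u nu : R -> R -> R) (t x : R) :
  (forall w, ex_derive f w) -> (forall w, ex_derive g w) -> (forall w, ex_derive h w) ->
  adjoint_KS f g h u nu t x =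
  nu t x * (- Derive f (u t x) * jet_ux u t x - Derive g (u t x) * jet_uxx u t x
            + Derive h (u t x) * jet_ux u t x ^ 2)
  - Derive (fun s => nu s x) t
  - Derive (fun y => nu t y * (- f (u t y) + 2 * h (u t y) * jet_ux u t y)) x
  + Derive (fun y => Derive (fun z => - (nu t z * g (u t z))) y) x.
Proof.
  intros Hf Hg Hh. unfold adjoint_KS, euler_op. cbv beta zeta.
  setoid_rewrite formal_lagrangian_d_ut. setoid_rewrite formal_lagrangian_d_ux.
  setoid_rewrite formal_lagrangian_d_uxx. rewrite formal_lagrangian_d_u; auto.
Qed.

Lemma smooth2_jets (u : R -> R -> R) : smooth2 u ->
  (forall t x, is_derive (fun s : R => u s x) t (jet_ut u t x)) /\
  (forall t x, is_derive (fun y : R => u t y) x (jet_ux u t x)) /\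
  (forall t x, is_derive (fun y : R => jet_ux u t y) x (jet_uxx u t x)).
Proof.
  intros Hu. split; [|split]; intros t x; apply Derive_correct.
  - apply (proj1 (proj1 (Hu nil) t x)).
  - apply (proj2 (proj1 (Hu nil) t x)).
  - apply (proj2 (proj1 (Hu (1%nat :: nil)) t x)).
Qed.

(** * Sufficiency *)

Section Sufficiency.
Variables (f g h E : R -> R) (K Kt Kx Kxx : R -> R -> R).
Hypotheses (Hf : forall w, ex_derive f w) (Hg : forall w, ex_derive g w)
  (Hh : forall w, ex_derive h w) (Hg0 : forall w, g w <> 0)
  (HE : forall w, is_derive E w (- E w * ((Derive g w + h w) / g w)))
  (HKt : forall t x, is_derive (fun s : R => K s x) t (Kt t x))
  (HKx : forall t x, is_derive (fun y : R => K t y) x (Kx t x))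
  (HKxx : forall t x, is_derive (fun y : R => Kx t y) x (Kxx t x))
  (HK : forall t x w, Kt t x = f w * Kx t x - g w * Kxx t x).

Lemma adjoint_KS_separated (u : R -> R -> R) (Hu : smooth2 u) (t x : R) :
  adjoint_KS f g h u (fun t x => K t x * E (u t x)) t x =
  K t x * E (u t x) * ((Derive g (u t x) + h (u t x)) / g (u t x)) *
  KS f g h t x (u t x) (jet_ut u t x) (jet_ux u t x) (jet_uxx u t x).
Proof.
  destruct (smooth2_jets u Hu) as (Ut & Ux & Uxx).
  assert (Inner : forall y, Derive (fun z => - (K t z * E (u t z) * g (u t z))) y =
    - (Kx t y * E (u t y) * g (u t y) - K t y * E (u t y) * h (u t y) * jet_ux u t y)).
  { intros y. compute_Derive (fun z : R => - (K t z * E (u t z) * g (u t z))) y.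
    rewrite (Derive_eta _ _ _ (HKx t y)), (Derive_eta _ _ _ (HE _)), (Derive_eta _ _ _ (Ux t y)).
    eta_reduce. field. auto. }
  rewrite adjoint_KS_eq; auto.
  rewrite (Derive_ext (fun y => Derive (fun z : R => - (K t z * E (u t z) * g (u t z))) y) _ x Inner).
  compute_Derive (fun s : R => K s x * E (u s x)) t.
  compute_Derive (fun y : R => K t y * E (u t y) * (- f (u t y) + 2 * h (u t y) * jet_ux u t y)) x.
  compute_Derive (fun y : R => - (Kx t y * E (u t y) * g (u t y)
                                  - K t y * E (u t y) * h (u t y) * jet_ux u t y)) x.
  rewrite (Derive_eta _ _ _ (HKt t x)), (Derive_eta _ _ _ (HKx t x)), (Derive_eta _ _ _ (HKxx t x)),
    (Derive_eta _ _ _ (HE _)), (Derive_eta _ _ _ (Ut t x)), (Derive_eta _ _ _ (Ux t x)),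
    (Derive_eta _ _ _ (Uxx t x)), (HK t x (u t x)).
  unfold KS. eta_reduce. field. auto.
Qed.
End Sufficiency.

Section Continuity.
Context {T : UniformSpace}.

Lemma continuous_Rplus (F G : T -> R) p :
  continuous F p -> continuous G p -> continuous (fun q => F q + G q) p.
Proof. intros; apply (continuous_plus F G); auto. Qed.

Lemma continuous_Rmult (F G : T -> R) p :
  continuous F p -> continuous G p -> continuous (fun q => F q * G q) p.
Proof. intros; apply (continuous_mult F G); auto. Qed.

Lemma continuous_comp_derivable (F : T -> R) (φ : R -> R) p :
  continuous F p -> (forall y, ex_derive φ y) -> continuous (fun q => φ (F q)) p.
Proof.
  intros HF Hφ. apply (continuous_comp F φ); auto.
  apply (@ex_derive_continuous R_AbsRing R_NormedModule), Hφ.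
Qed.

End Continuity.

Lemma continuous_pair {U V W : UniformSpace} (F : U -> V) (G : U -> W) p :
  continuous F p -> continuous G p -> continuous (fun q => (F q, G q)) p.
Proof.
  intros HF HG. apply (continuous_comp_2 F G pair); auto.
  apply (continuous_ext (fun q => q)); [intros [a b]; reflexivity | apply continuous_id].
Qed.

Lemma continuous_fst_at {U V : UniformSpace} (p : U * V) : continuous fst p.
Proof. destruct p; apply continuous_fst. Qed.

Lemma continuous_snd_at {U V : UniformSpace} (p : U * V) : continuous snd p.
Proof. destruct p; apply continuous_snd. Qed.

Definition quad (A B C D s y : R) : R := A + B * s + C * y + D * y ^ 2.

Lemma quad_dt A B C D s y : is_derive (fun s : R => quad A B C D s y) s B.
Proof. unfold quad. auto_derive; auto; ring. Qed.

Lemma quad_dx A B C D s y : is_derive (fun y : R => quad A B C D s y) y (C + 2 * D * y).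
Proof. unfold quad. auto_derive; auto; ring. Qed.

Lemma smooth2_quad A B C D : smooth2 (quad A B C D).
Proof.
  intros l. assert (Hl : exists A' B' C' D', iterD2 l (quad A B C D) = quad A' B' C' D').
  { induction l as [|[|i] l (A' & B' & C' & D' & IH)]; [now exists A, B, C, D| |];
      simpl; rewrite IH; [exists B', 0, 0, 0 | exists C', 0, (2 * D'), 0];
      do 2 (apply functional_extensionality; intro); simpl.
    - rewrite (is_derive_unique _ _ _ (quad_dt _ _ _ _ _ _)). unfold quad; ring.
    - rewrite (is_derive_unique _ _ _ (quad_dx _ _ _ _ _ _)). unfold quad; ring. }
  destruct Hl as (A' & B' & C' & D' & ->). split.
  - intros t x; split; eexists; [apply quad_dt | apply quad_dx].
  - intros t x. unfold quad.
    apply continuous_Rplus; [apply continuous_Rplus|].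
    + apply (continuous_comp_derivable fst (fun s => A' + B' * s)); [apply continuous_fst_at|].
      intros; auto_derive; auto.
    + apply (continuous_comp_derivable snd (fun y => C' * y)); [apply continuous_snd_at|].
      intros; auto_derive; auto.
    + apply (continuous_comp_derivable snd (fun y => D' * y ^ 2)); [apply continuous_snd_at|].
      intros; auto_derive; auto.
Qed.

(* The three families of the theorem are instances; the family is closed under d/dt, d/dx. *)
Definition ansatz (a q p m n c t x : R) : R := p * exp (a * x + q * t) + m * x + n * t + c.

Lemma ansatz_dt a q p m n c t x :
  is_derive (fun s : R => ansatz a q p m n c s x) t (ansatz a q (p * q) 0 0 n t x).
Proof. unfold ansatz. auto_derive; auto; ring. Qed.

Lemma ansatz_dx a q p m n c t x :
  is_derive (fun y : R => ansatz a q p m n c t y) x (ansatz a q (p * a) 0 0 m t x).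
Proof. unfold ansatz. auto_derive; auto; ring. Qed.

Lemma continuous_ansatz a q p m n c z :
  continuous (fun z : R * R => ansatz a q p m n c (fst z) (snd z)) z.
Proof.
  assert (Hlin : forall (k : R) (F : R * R -> R), continuous F z -> continuous (fun z => k * F z) z).
  { intros k F HF. apply (continuous_comp_derivable F (fun y => k * y)); auto.
    intros; auto_derive; auto. }
  unfold ansatz. repeat apply continuous_Rplus; try apply continuous_const;
    try (apply Hlin; first [apply continuous_fst_at | apply continuous_snd_at]).
  apply Hlin, (continuous_comp_derivable _ exp); [|intros; auto_derive; auto].
  apply continuous_Rplus; apply Hlin; first [apply continuous_fst_at | apply continuous_snd_at].
Qed.

Lemma smooth3_ansatz_mult (E : R -> R) a q p m n c :
  smooth1 E -> smooth3 (fun t x w => ansatz a q p m n c t x * E w).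
Proof.
  intros HE l.
  assert (Hl : exists p' m' n' c' k, iterD3 l (fun t x w => ansatz a q p m n c t x * E w)
                 = fun t x w => ansatz a q p' m' n' c' t x * Derive_n E k w).
  { induction l as [|i l (p' & m' & n' & c' & k & IH)]; [now exists p, m, n, c, 0%nat|].
    simpl; rewrite IH. destruct i as [|[|i]];
      [exists (p' * q), 0, 0, n', k | exists (p' * a), 0, 0, m', k | exists p', m', n', c', (S k)];
      do 3 (apply functional_extensionality; intro); simpl; rewrite ?Derive_scal_l, ?Derive_scal.
    - rewrite (is_derive_unique _ _ _ (ansatz_dt _ _ _ _ _ _ _ _)). ring.
    - rewrite (is_derive_unique _ _ _ (ansatz_dx _ _ _ _ _ _ _ _)). ring.
    - reflexivity. }
  destruct Hl as (p' & m' & n' & c' & k & ->). split.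
  - intros t x w. unfold ansatz. split; [|split]; auto_derive; auto.
  - intros t x w. apply continuous_Rmult.
    + apply (continuous_comp fst (fun z => ansatz a q p' m' n' c' (fst z) (snd z))).
      * apply continuous_fst_at.
      * apply continuous_ansatz.
    + apply (continuous_comp_derivable snd), HE. apply continuous_snd_at.
Qed.

Lemma nsa_substitution_ansatz (f g h P : R -> R) (a q p m n c : R) :
  smooth1 f -> smooth1 g -> smooth1 h -> (forall w, g w <> 0) ->
  (forall w, is_derive P w ((Derive g w + h w) / g w)) ->
  (forall w, p * (q - f w * a + g w * a ^ 2) = 0) -> (forall w, n = f w * m) ->
  (exists t x, ansatz a q p m n c t x <> 0) ->
  nsa_substitution f g h (fun t x w => ansatz a q p m n c t x * exp (- P w)).
Proof.
  intros Hf Hg Hh Hg0 HP Hexp Hlin (t0 & x0 & Hnz).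
  split; [|split].
  - apply smooth3_ansatz_mult, (smooth1_exp_opp_integral g h); auto.
  - exists t0, x0, 0. apply Rmult_integral_contrapositive; split; auto.
    apply Rgt_not_eq, exp_pos.
  - exists (fun t x w _ _ _ => ansatz a q p m n c t x * exp (- P w) * ((Derive g w + h w) / g w)).
    intros u Hu t x.
    apply (adjoint_KS_separated f g h (fun w => exp (- P w)) (ansatz a q p m n c)
             (ansatz a q (p * q) 0 0 n) (ansatz a q (p * a) 0 0 m) (ansatz a q (p * a * a) 0 0 0));
      auto using ansatz_dt, ansatz_dx, smooth1_ex_derive.
    + intros w. specialize (HP w). auto_derive; [exists ((Derive g w + h w) / g w); auto|].
      rewrite (Derive_eta _ _ _ HP). ring.
    + intros t' x' w. unfold ansatz. rewrite (Hlin w). apply Rminus_diag_uniq.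
      transitivity (exp (a * x' + q * t') * (p * (q - f w * a + g w * a ^ 2))); [ring|].
      rewrite Hexp. ring.
Qed.

(** * Necessity *)

Lemma is_derive_comp_2d (F Fy Fz : R -> R -> R) (a b : R -> R) (s da db : R) :
  (forall y z, is_derive (fun y' : R => F y' z) y (Fy y z)) ->
  (forall y z, is_derive (fun z' : R => F y z') z (Fz y z)) ->
  continuous (fun p : R * R => Fy (fst p) (snd p)) (a s, b s) ->
  is_derive a s da -> is_derive b s db ->
  is_derive (fun s => F (a s) (b s)) s (Fy (a s) (b s) * da + Fz (a s) (b s) * db).
Proof.
  intros HFy HFz HC Ha Hb.
  apply is_derive_Reals, derivable_pt_lim_comp_2d; [|apply is_derive_Reals; auto..].
  apply filterdiff_differentiable_pt_lim, is_derive_filterdiff; auto.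
  apply filter_forall; intros; apply HFy.
Qed.

Definition along (φ : R -> R -> R -> R) (u : R -> R -> R) (t x : R) : R := φ t x (u t x).

Section Along.
Variables (φ : R -> R -> R -> R) (u : R -> R -> R).
Hypothesis Hφ : smooth3 φ.

Lemma is_derive_along_t l t x dv :
  is_derive (fun s : R => u s x) t dv ->
  is_derive (fun s : R => along (iterD3 l φ) u s x) t
    (along (iterD3 (0%nat :: l) φ) u t x + along (iterD3 (2%nat :: l) φ) u t x * dv).
Proof.
  intros Hu. unfold along. rewrite <- (Rmult_1_r (iterD3 (0%nat :: l) φ t x (u t x))).
  apply (is_derive_comp_2d (fun s z => iterD3 l φ s x z) (fun s => iterD3 (0%nat :: l) φ s x)
           (fun s => iterD3 (2%nat :: l) φ s x) (fun s => s) (fun s => u s x));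
    auto using is_derive_id.
  - intros s z; apply Derive_correct, (proj1 (Hφ l) s x z).
  - intros s z; apply Derive_correct, (proj1 (Hφ l) s x z).
  - apply (continuous_comp (fun p : R * R => (fst p, x, snd p))
             (fun p => iterD3 (0%nat :: l) φ (fst (fst p)) (snd (fst p)) (snd p))).
    + repeat apply continuous_pair; auto using continuous_const, continuous_fst_at, continuous_snd_at.
    + apply (Hφ (0%nat :: l)).
Qed.

Lemma is_derive_along_x l t x dv :
  is_derive (fun y : R => u t y) x dv ->
  is_derive (fun y : R => along (iterD3 l φ) u t y) x
    (along (iterD3 (1%nat :: l) φ) u t x + along (iterD3 (2%nat :: l) φ) u t x * dv).
Proof.
  intros Hu. unfold along. rewrite <- (Rmult_1_r (iterD3 (1%nat :: l) φ t x (u t x))).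
  apply (is_derive_comp_2d (fun y z => iterD3 l φ t y z) (iterD3 (1%nat :: l) φ t)
           (iterD3 (2%nat :: l) φ t) (fun y => y) (fun y => u t y)); auto using is_derive_id.
  - intros y z; apply Derive_correct, (proj1 (Hφ l) t y z).
  - intros y z; apply Derive_correct, (proj1 (Hφ l) t y z).
  - apply (continuous_comp (fun p : R * R => (t, fst p, snd p))
             (fun p => iterD3 (1%nat :: l) φ (fst (fst p)) (snd (fst p)) (snd p))).
    + repeat apply continuous_pair; auto using continuous_const, continuous_fst_at, continuous_snd_at.
    + apply (Hφ (1%nat :: l)).
Qed.

End Along.

(* Otherwise [auto_derive] unfolds [pd3 i φ] inside the functions it differentiates. *)
#[local] Arguments pd3 : simpl never.

Lemma adjoint_KS_along_stationary (f g h : R -> R) (φ : R -> R -> R -> R) (u : R -> R -> R)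
    (t x : R) :
  smooth1 f -> smooth1 g -> smooth1 h -> smooth3 φ -> smooth2 u -> jet_ux u t x = 0 ->
  adjoint_KS f g h u (along φ u) t x =
  - pd3 0 φ t x (u t x) + f (u t x) * pd3 1 φ t x (u t x)
  - g (u t x) * pd3 1 (pd3 1 φ) t x (u t x)
  - (jet_ut u t x + jet_uxx u t x * g (u t x)) * pd3 2 φ t x (u t x)
  - 2 * jet_uxx u t x * (Derive g (u t x) + h (u t x)) * φ t x (u t x).
Proof.
  intros Hf Hg Hh Hφ Hu Hux0.
  destruct (smooth2_jets u Hu) as (Ut & Ux & Uxx).
  assert (Df := smooth1_ex_derive f Hf). assert (Dg := smooth1_ex_derive g Hg).
  assert (Dh := smooth1_ex_derive h Hh).
  assert (Dg' : forall w, ex_derive (Derive g) w) by apply (Hg 1%nat).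
  assert (Nt := is_derive_along_t φ u Hφ nil t x _ (Ut t x)).
  assert (N0 : forall y, is_derive (fun y : R => along φ u t y) y
                 (along (pd3 1 φ) u t y + along (pd3 2 φ) u t y * jet_ux u t y))
    by exact (fun y => is_derive_along_x φ u Hφ nil t y _ (Ux t y)).
  assert (N1 := fun y => is_derive_along_x φ u Hφ (1%nat :: nil) t y _ (Ux t y)).
  assert (N2 := fun y => is_derive_along_x φ u Hφ (2%nat :: nil) t y _ (Ux t y)).
  cbn [iterD3] in Nt, N1, N2.
  assert (Inner : forall y, Derive (fun z => - (along φ u t z * g (u t z))) y =
    - ((along (pd3 1 φ) u t y + along (pd3 2 φ) u t y * jet_ux u t y) * g (u t y)
       + along φ u t y * (jet_ux u t y * Derive g (u t y)))).
  { intros y. compute_Derive (fun z : R => - (along φ u t z * g (u t z))) y.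
    rewrite (Derive_eta _ _ _ (N0 y)), (Derive_eta _ _ _ (Ux t y)). eta_reduce. ring. }
  rewrite adjoint_KS_eq; auto.
  rewrite (Derive_ext (fun y => Derive (fun z : R => - (along φ u t z * g (u t z))) y) _ x Inner).
  rewrite (Derive_eta _ _ _ Nt).
  compute_Derive (fun y : R => along φ u t y * (- f (u t y) + 2 * h (u t y) * jet_ux u t y)) x.
  compute_Derive (fun y : R => - ((along (pd3 1 φ) u t y + along (pd3 2 φ) u t y * jet_ux u t y)
                                  * g (u t y) + along φ u t y * (jet_ux u t y * Derive g (u t y)))) x.
  rewrite (Derive_eta _ _ _ (N0 x)), (Derive_eta _ _ _ (N1 x)), (Derive_eta _ _ _ (N2 x)),
    (Derive_eta _ _ _ (Ux t x)), (Derive_eta _ _ _ (Uxx t x)), Hux0.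
  unfold along, pd3. eta_reduce. ring.
Qed.

Lemma nsa_substitution_determining_eq (f g h : R -> R) (φ : R -> R -> R -> R) :
  smooth1 f -> smooth1 g -> smooth1 h -> nsa_substitution f g h φ ->
  forall t x w r,
  - pd3 0 φ t x w + f w * pd3 1 φ t x w - g w * pd3 1 (pd3 1 φ) t x w
  - 2 * r * (g w * pd3 2 φ t x w + (Derive g w + h w) * φ t x w) = 0.
Proof.
  intros Hf Hg Hh (Hφ & _ & λ & Hλ) t x w r.
  (* At (t, x): u = w, u_x = 0, u_xx = r and u_t = g(w) r, so F vanishes there. *)
  set (u := quad (w - g w * r * t + r * x * x - r / 2 * x ^ 2) (g w * r) (- (r * x)) (r / 2)).
  assert (Hu : smooth2 u) by apply smooth2_quad.
  assert (Hu0 : u t x = w) by (unfold u, quad; field).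
  assert (Jt : jet_ut u t x = g w * r) by apply is_derive_unique, quad_dt.
  assert (Jx : forall y, jet_ux u t y = r * (y - x)).
  { intros y. apply is_derive_unique.
    replace (r * (y - x)) with (- (r * x) + 2 * (r / 2) * y) by field. apply quad_dx. }
  assert (Jxx : jet_uxx u t x = r).
  { unfold jet_uxx. rewrite (Derive_ext _ _ _ Jx). apply is_derive_unique. auto_derive; auto; ring. }
  specialize (Hλ u Hu t x).
  assert (KS0 : KS f g h t x (u t x) (jet_ut u t x) (jet_ux u t x) (jet_uxx u t x) = 0)
    by (unfold KS; rewrite Jt, Jx, Jxx, Hu0; ring).
  rewrite KS0, Rmult_0_r in Hλ.
  change (fun t x : R => φ t x (u t x)) with (along φ u) in Hλ.
  rewrite adjoint_KS_along_stationary, Hu0, Jt, Jxx in Hλ; auto.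
  - rewrite <- Hλ. ring.
  - rewrite Jx. ring.
Qed.

Definition dt (C : R -> R -> R) (t x : R) : R := Derive (fun s => C s x) t.
Definition dx (C : R -> R -> R) (t x : R) : R := Derive (fun y => C t y) x.

Definition kernel_solution (f g : R -> R) (C : R -> R -> R) : Prop :=
  (forall t x, ex_derive (fun s => C s x) t) /\
  (forall t x, ex_derive (fun y => C t y) x) /\
  (forall t x, ex_derive (fun y => dx C t y) x) /\
  (forall t x w, dt C t x = f w * dx C t x - g w * dx (dx C) t x).

Lemma nsa_substitution_separated (f g h P : R -> R) (φ : R -> R -> R -> R) :
  smooth1 f -> smooth1 g -> smooth1 h -> (forall w, g w <> 0) ->
  (forall w, is_derive P w ((Derive g w + h w) / g w)) ->
  nsa_substitution f g h φ ->
  exists C, (forall t x w, φ t x w = C t x * exp (- P w)) /\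
    (exists t x, C t x <> 0) /\ kernel_solution f g C.
Proof.
  intros Hf Hg Hh Hg0 HP Hns.
  assert (Hid := nsa_substitution_determining_eq f g h φ Hf Hg Hh Hns).
  destruct Hns as (Hφ & (t0 & x0 & w0 & Hnz) & _).
  exists (fun t x => φ t x 0 * exp (P 0)).
  assert (Hsep : forall t x w, φ t x w = φ t x 0 * exp (P 0) * exp (- P w)).
  { intros t x w.
    assert (Hode : forall w, is_derive (φ t x) w (- ((Derive g w + h w) / g w) * φ t x w)).
    { intros z. replace (- ((Derive g z + h z) / g z) * φ t x z) with (pd3 2 φ t x z).
      - apply Derive_correct, (proj1 (Hφ nil) t x z).
      - pose proof (Hid t x z 1). pose proof (Hid t x z 0). field_simplify_eq; auto. lra. }
    rewrite (linear_ode_exp (φ t x) (fun w => - P w) _ (fun w => is_derive_opp _ _ _ (HP w)) Hode w).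
    rewrite Rmult_assoc, <- exp_plus. do 2 f_equal. ring. }
  split; [exact Hsep|]. split.
  { exists t0, x0. intros Hz. apply Hnz. rewrite Hsep, Hz. ring. }
  set (C := fun t x => φ t x 0 * exp (P 0)).
  assert (Cx : forall t x, dx C t x = pd3 1 φ t x 0 * exp (P 0)) by (intros; apply Derive_scal_l).
  assert (Pt : forall t x w, pd3 0 φ t x w = dt C t x * exp (- P w)).
  { intros t x w. unfold pd3. rewrite (Derive_ext _ _ _ (fun s => Hsep s x w)). apply Derive_scal_l. }
  assert (Px : forall t x w, pd3 1 φ t x w = dx C t x * exp (- P w)).
  { intros t x w. unfold pd3. rewrite (Derive_ext _ _ _ (fun y => Hsep t y w)). apply Derive_scal_l. }
  assert (Pxx : forall t x w, pd3 1 (pd3 1 φ) t x w = dx (dx C) t x * exp (- P w)).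
  { intros t x w. change (Derive (fun y => pd3 1 φ t y w) x = dx (dx C) t x * exp (- P w)).
    rewrite (Derive_ext _ _ _ (fun y => Px t y w)). apply Derive_scal_l. }
  split; [|split; [|split]].
  - intros t x. apply (ex_derive_mult _ (fun _ => exp (P 0))); [|apply ex_derive_const].
    apply (proj1 (Hφ nil) t x 0).
  - intros t x. apply (ex_derive_mult _ (fun _ => exp (P 0))); [|apply ex_derive_const].
    apply (proj1 (Hφ nil) t x 0).
  - intros t x. apply (ex_derive_ext (fun y => pd3 1 φ t y 0 * exp (P 0)));
      [intros; symmetry; apply Cx|].
    apply (ex_derive_mult _ (fun _ => exp (P 0))); [|apply ex_derive_const].
    apply (proj1 (Hφ (1%nat :: nil)) t x 0).
  - intros t x w. apply (Rmult_eq_reg_r (exp (- P w))); [|apply Rgt_not_eq, exp_pos].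
    pose proof (Hid t x w 0) as H. rewrite Pt, Px, Pxx in H. lra.
Qed.

(** * Classification *)

Section KernelEquation.
Variables (f g : R -> R) (C : R -> R -> R).
Hypothesis HC : kernel_solution f g C.

Let Dt t x : is_derive (fun s : R => C s x) t (dt C t x).
Proof. apply Derive_correct, (proj1 HC). Qed.
Let Dx t x : is_derive (fun y : R => C t y) x (dx C t x).
Proof. apply Derive_correct, (proj1 (proj2 HC)). Qed.
Let Dxx t x : is_derive (fun y : R => dx C t y) x (dx (dx C) t x).
Proof. apply Derive_correct, (proj1 (proj2 (proj2 HC))). Qed.
Let PDE : forall t x w, dt C t x = f w * dx C t x - g w * dx (dx C) t x := proj2 (proj2 (proj2 HC)).

Lemma kernel_solution_const :
  (~ exists a b, forall w, f w = a * g w + b) -> forall t x, C t x = C 0 0.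
Proof.
  intros Hf.
  assert (Cx0 : forall t x, dx C t x = 0).
  { intros t x. apply NNPP. intros Hn. apply Hf.
    exists (dx (dx C) t x / dx C t x), (dt C t x / dx C t x). intros w.
    rewrite (PDE t x w). field. exact Hn. }
  assert (Ct0 : forall t x, dt C t x = 0).
  { intros t x. rewrite (PDE t x 0), Cx0, <- (is_derive_unique _ _ _ (Dxx t x)).
    rewrite (Derive_ext _ _ _ (Cx0 t)), Derive_const. ring. }
  intros t x.
  rewrite (is_derive_0_const (fun y => C t y) (fun y => eq_ind _ _ (Dx t y) _ (Cx0 t y)) x 0).
  apply (is_derive_0_const (fun s => C s 0) (fun s => eq_ind _ _ (Dt s 0) _ (Ct0 s 0))).
Qed.

Lemma kernel_solution_affine_coefficients (a b w1 w2 : R) :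
  (forall w, f w = a * g w + b) -> g w1 <> g w2 ->
  forall t x, dx (dx C) t x = a * dx C t x /\ dt C t x = b * dx C t x.
Proof.
  intros Hf Hg12 t x.
  assert (Hxx : dx (dx C) t x = a * dx C t x).
  { apply (Rmult_eq_reg_l (g w1 - g w2)); [|lra].
    pose proof (PDE t x w1). pose proof (PDE t x w2). rewrite !Hf in *. lra. }
  split; [exact Hxx|]. rewrite (PDE t x w1), Hxx, Hf. ring.
Qed.

Lemma kernel_solution_linear (b w1 w2 : R) :
  (forall w, f w = b) -> g w1 <> g w2 ->
  forall t x, C t x = dx C 0 0 * (x + b * t) + C 0 0.
Proof.
  intros Hf Hg12.
  assert (Hab := kernel_solution_affine_coefficients 0 b w1 w2 ltac:(intros; rewrite Hf; ring) Hg12).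
  assert (Cx : forall t y, dx C t y = dx C t 0).
  { intros t y. apply (is_derive_0_const (dx C t)). intros z.
    replace 0 with (dx (dx C) t z) by (rewrite (proj1 (Hab t z)); ring). apply Dxx. }
  assert (Clin : forall t x, C t x = dx C t 0 * x + C t 0).
  { intros t x.
    rewrite (same_derivative_const_diff (fun y => C t y) (fun y => dx C t 0 * y) (fun _ => dx C t 0)).
    - ring.
    - intros y. rewrite <- (Cx t y). apply Dx.
    - intros y. auto_derive; auto; ring. }
  assert (Cx0 : forall t, dx C t 0 = dx C 0 0).
  { intros t. apply (is_derive_0_const (fun s => dx C s 0)). intros s.
    apply (is_derive_extR (fun s => C s 1 - C s 0)); [intros r; cbv beta; rewrite (Clin r 1); ring|].
    auto_derive; [ex_derive_side|].
    rewrite (Derive_eta _ _ _ (Dt s 1)), (Derive_eta _ _ _ (Dt s 0)), (proj2 (Hab s 1)),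
      (proj2 (Hab s 0)), (Cx s 1). ring. }
  assert (C0 : forall t, C t 0 = dx C 0 0 * b * t + C 0 0).
  { intros t.
    rewrite (same_derivative_const_diff (fun s => C s 0) (fun s => dx C 0 0 * b * s)
               (fun _ => dx C 0 0 * b)).
    - ring.
    - intros s. replace (dx C 0 0 * b) with (dt C s 0) by (rewrite (proj2 (Hab s 0)), Cx0; ring).
      apply Dt.
    - intros s. auto_derive; auto; ring. }
  intros t x. rewrite Clin, C0, Cx0. ring.
Qed.

Lemma kernel_solution_exp (a b w1 w2 : R) :
  (forall w, f w = a * g w + b) -> g w1 <> g w2 -> a <> 0 ->
  exists c1 c2, forall t x, C t x = c1 * exp (a * x + a * b * t) + c2.
Proof.
  intros Hf Hg12 Ha.
  assert (Hab := kernel_solution_affine_coefficients a b w1 w2 Hf Hg12).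
  assert (Cx : forall t y, dx C t y = dx C t 0 * exp (a * y)).
  { intros t. apply (linear_ode_exp_const (dx C t)). intros y. rewrite <- (proj1 (Hab t y)). apply Dxx. }
  (* The t-dependence of μ is read off C(t,1) - C(t,0), so no mixed partials are needed. *)
  set (μ := fun t => dx C t 0 / a).
  assert (Clin : forall t x, C t x = μ t * exp (a * x) + (C t 0 - μ t)).
  { intros t x.
    rewrite (same_derivative_const_diff (fun y => C t y) (fun y => μ t * exp (a * y)) (dx C t)).
    - rewrite Rmult_0_r, exp_0. ring.
    - apply Dx.
    - intros y. auto_derive; auto. rewrite Cx. unfold μ. field. exact Ha. }
  assert (Hea : exp a - 1 <> 0).
  { intros He. apply Ha, exp_inv. rewrite exp_0. lra. }
  assert (μt : forall t, μ t = μ 0 * exp (a * b * t)).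
  { apply (linear_ode_exp_const μ). intros s.
    apply (is_derive_extR (fun s => (C s 1 - C s 0) / (exp a - 1)));
      [intros; rewrite (Clin _ 1), Rmult_1_r; field; exact Hea|].
    auto_derive; [ex_derive_side|].
    rewrite (Derive_eta _ _ _ (Dt s 1)), (Derive_eta _ _ _ (Dt s 0)), (proj2 (Hab s 1)),
      (proj2 (Hab s 0)), (Cx s 1), Rmult_1_r. unfold μ. field. auto. }
  assert (C0 : forall t, C t 0 = μ 0 * exp (a * b * t) + (C 0 0 - μ 0)).
  { intros t.
    rewrite (same_derivative_const_diff (fun s => C s 0) (fun s => μ 0 * exp (a * b * s))
               (fun s => dt C s 0)).
    - rewrite Rmult_0_r, exp_0. ring.
    - intros s. apply Dt.
    - intros s. auto_derive; auto. rewrite (proj2 (Hab s 0)).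
      replace (μ 0 * (a * b * 1 * exp (a * b * s))) with (a * b * μ s) by (rewrite μt; ring).
      unfold μ. field. exact Ha. }
  exists (μ 0), (C 0 0 - μ 0). intros t x.
  rewrite Clin, C0, μt, exp_plus. ring.
Qed.

End KernelEquation.

Lemma not_constant_of_Derive_neq0 (g : R -> R) (x : R) :
  Derive g x <> 0 -> exists w1 w2, g w1 <> g w2.
Proof.
  intros Hg. apply NNPP. intros Hc. apply Hg.
  rewrite (Derive_ext g (fun _ => g 0)), Derive_const; [reflexivity|].
  intros w. apply NNPP. intros Hw. apply Hc. now exists w, 0.
Qed.

Lemma ansatz_exp_nonzero (a q c1 c2 : R) :
  a <> 0 -> (c1, c2) <> (0, 0) -> exists t x, ansatz a q c1 0 0 c2 t x <> 0.
Proof.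
  intros Ha Hc.
  destruct (Req_dec (ansatz a q c1 0 0 c2 0 0) 0) as [H0|]; [|now exists 0, 0].
  destruct (Req_dec (ansatz a q c1 0 0 c2 0 1) 0) as [H1|]; [|now exists 0, 1].
  exfalso. unfold ansatz in H0, H1.
  replace (a * 0 + q * 0) with 0 in H0 by ring. replace (a * 1 + q * 0) with a in H1 by ring.
  rewrite exp_0 in H0.
  assert (Hea : exp a <> 1) by (intros He; apply Ha, exp_inv; rewrite exp_0; exact He).
  assert (c1 = 0) by (apply (Rmult_eq_reg_r (exp a - 1)); lra).
  apply Hc. f_equal; lra.
Qed.

Lemma ansatz_linear_nonzero (b c3 c4 : R) :
  (c3, c4) <> (0, 0) -> exists t x, ansatz 0 0 0 c3 (c3 * b) c4 t x <> 0.
Proof.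
  intros Hc.
  destruct (Req_dec (ansatz 0 0 0 c3 (c3 * b) c4 0 0) 0) as [H0|]; [|now exists 0, 0].
  destruct (Req_dec (ansatz 0 0 0 c3 (c3 * b) c4 0 1) 0) as [H1|]; [|now exists 0, 1].
  exfalso. unfold ansatz in H0, H1. apply Hc. f_equal; lra.
Qed.

Lemma nsa_substitution_ext (f g h : R -> R) (φ ψ : R -> R -> R -> R) :
  (forall t x w, φ t x w = ψ t x w) -> nsa_substitution f g h ψ -> nsa_substitution f g h φ.
Proof.
  intros H. replace φ with ψ; [trivial|].
  do 3 (apply functional_extensionality; intro). symmetry; apply H.
Qed.

Section Classification.
Variables (f g h P : R -> R).
Hypotheses (Hf : smooth1 f) (Hg : smooth1 g) (Hh : smooth1 h) (Hg0 : forall w, g w <> 0)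
  (HP : forall w, is_derive P w ((Derive g w + h w) / g w)).

Lemma nsa_substitution_const_mult (c : R) :
  c <> 0 -> nsa_substitution f g h (fun t x w => c * exp (- P w)).
Proof.
  intros Hc.
  apply (nsa_substitution_ext _ _ _ _ (fun t x w => ansatz 0 0 0 0 0 c t x * exp (- P w))).
  { intros t x w. unfold ansatz. ring. }
  apply nsa_substitution_ansatz; auto; intros; try ring.
  exists 0, 0. unfold ansatz. rewrite !Rmult_0_l, !Rplus_0_l. exact Hc.
Qed.

Lemma nsa_substitution_exp_iff (a b : R) :
  (forall w, f w = a * g w + b) -> (exists w1 w2, f w1 <> f w2) ->
  forall φ, nsa_substitution f g h φ <->
    exists c1 c2, (c1, c2) <> (0, 0) /\
      forall t x w, φ t x w = (c1 * exp (a * x + a * b * t) + c2) * exp (- P w).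
Proof.
  intros Haff (w1 & w2 & Hf12) φ.
  assert (Ha : a <> 0) by (intros ->; apply Hf12; rewrite !Haff; ring).
  assert (Hg12 : g w1 <> g w2) by (intros He; apply Hf12; rewrite !Haff, He; ring).
  split.
  - intros Hns.
    destruct (nsa_substitution_separated f g h P φ Hf Hg Hh Hg0 HP Hns)
      as (C & Hφ & (t0 & x0 & Hnz) & HC).
    destruct (kernel_solution_exp f g C HC a b w1 w2 Haff Hg12 Ha) as (c1 & c2 & HCe).
    exists c1, c2. split.
    + intros Hc. injection Hc as -> ->. apply Hnz. rewrite HCe. ring.
    + intros t x w. rewrite Hφ, HCe. reflexivity.
  - intros (c1 & c2 & Hc & Hφ).
    apply (nsa_substitution_ext _ _ _ _ (fun t x w => ansatz a (a * b) c1 0 0 c2 t x * exp (- P w))).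
    { intros t x w. rewrite Hφ. unfold ansatz. ring. }
    apply nsa_substitution_ansatz; auto using ansatz_exp_nonzero.
    + intros w. rewrite Haff. ring.
    + intros w. ring.
Qed.

Lemma nsa_substitution_linear_iff (b : R) :
  (forall w, f w = b) -> (exists w1 w2, g w1 <> g w2) ->
  forall φ, nsa_substitution f g h φ <->
    exists c3 c4, (c3, c4) <> (0, 0) /\
      forall t x w, φ t x w = (c3 * (x + b * t) + c4) * exp (- P w).
Proof.
  intros Hb (w1 & w2 & Hg12) φ. split.
  - intros Hns.
    destruct (nsa_substitution_separated f g h P φ Hf Hg Hh Hg0 HP Hns)
      as (C & Hφ & (t0 & x0 & Hnz) & HC).
    assert (HCl := kernel_solution_linear f g C HC b w1 w2 Hb Hg12).
    exists (dx C 0 0), (C 0 0). split.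
    + intros Hc. injection Hc as E3 E4. apply Hnz. rewrite HCl, E3, E4. ring.
    + intros t x w. rewrite Hφ, HCl. reflexivity.
  - intros (c3 & c4 & Hc & Hφ).
    apply (nsa_substitution_ext _ _ _ _ (fun t x w => ansatz 0 0 0 c3 (c3 * b) c4 t x * exp (- P w))).
    { intros t x w. rewrite Hφ. unfold ansatz. ring. }
    apply nsa_substitution_ansatz; auto using ansatz_linear_nonzero.
    + intros w. ring.
    + intros w. rewrite Hb. ring.
Qed.

Lemma nsa_substitution_generic_iff :
  (~ exists a b, forall w, f w = a * g w + b) ->
  forall φ, nsa_substitution f g h φ <->
    exists c5, c5 <> 0 /\ forall t x w, φ t x w = c5 * exp (- P w).
Proof.
  intros Hnaff φ. split.
  - intros Hns.
    destruct (nsa_substitution_separated f g h P φ Hf Hg Hh Hg0 HP Hns)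
      as (C & Hφ & (t0 & x0 & Hnz) & HC).
    assert (HCc := kernel_solution_const f g C HC Hnaff).
    exists (C 0 0). split.
    + rewrite <- (HCc t0 x0). exact Hnz.
    + intros t x w. rewrite Hφ, HCc. reflexivity.
  - intros (c5 & Hc & Hφ).
    apply (nsa_substitution_ext _ _ _ _ _ Hφ), nsa_substitution_const_mult, Hc.
Qed.

End Classification.

Theorem theorem1 (f g h : R -> R)
  (Hf : smooth1 f) (Hg : smooth1 g) (Hh : smooth1 h)
  (Hf0 : forall w, f w <> 0) (Hg0 : forall w, g w <> 0)
  (Hg'0 : forall w, Derive g w <> 0)
  (P : R -> R) (HP : forall w, is_derive P w ((Derive g w + h w) / g w)) :
  let E := fun w => exp (- P w) in
  nonlinearly_self_adjoint f g h /\
  (* (i) *)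
  (forall a b : R, (forall w, f w = a * g w + b) -> (exists w1 w2, f w1 <> f w2) ->
     forall φ, nsa_substitution f g h φ <->
       exists c1 c2 : R, (c1, c2) <> (0, 0) /\
         forall t x w, φ t x w = (c1 * exp (a * x + a * b * t) + c2) * E w) /\
  (* (ii) *)
  (forall b : R, (forall w, f w = b) ->
     forall φ, nsa_substitution f g h φ <->
       exists c3 c4 : R, (c3, c4) <> (0, 0) /\
         forall t x w, φ t x w = (c3 * (x + b * t) + c4) * E w) /\
  (* (iii) *)
  ((~ exists a b : R, forall w, f w = a * g w + b) ->
     forall φ, nsa_substitution f g h φ <->
       exists c5 : R, c5 <> 0 /\ forall t x w, φ t x w = c5 * E w).
Proof.
  intros E. split; [|split; [|split]].
  - exists (fun t x w => 1 * exp (- P w)).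
    apply nsa_substitution_const_mult; auto using R1_neq_R0.
  - apply nsa_substitution_exp_iff; auto.
  - intros b Hb. apply nsa_substitution_linear_iff; auto.
    apply (not_constant_of_Derive_neq0 g 0), Hg'0.
  - apply nsa_substitution_generic_iff; auto.
Qed.
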